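(* Let $K$ be a field of characteristic $p>0$ such that $K/k$ is a finitely generated field extension, where $k=\bigcap_{n\ge0}K^{p^n}$. Let $W$ be a subfield with $k\subseteq W\subseteq K$, and let $W_n=W\cdot K^{p^n}$. Then $\operatorname{Diff}_W(K)=\bigcup_{n\ge0}\operatorname{Diff}_{W_n}(K)$.
   Context: $\cdot$ denotes the compositum in $K$. For subfields $A\subseteq B$, $\operatorname{Diff}_A(B)$ is the union over $n\ge0$ of the sets of $A$-linear maps $D:B\to B$ with $[b_0,[b_1,[\ldots,[b_n,D]\ldots]]]=0$ for all $b_i\in B$ (elements acting by multiplication, $[X,Y]=XY-YX$). *)

From mathcomp Require Import all_boot all_algebra.
Set Implicit Arguments. Unset Strict Implicit. Unset Printing Implicit Defensive.
Import GRing.Theory.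
Local Open Scope ring_scope.

Section Defs.
Variable K : fieldType.

Definition is_subfield (S : K -> Prop) : Prop :=
  [/\ S 0, S 1,
      (forall x y, S x -> S y -> S (x - y)),
      (forall x y, S x -> S y -> S (x * y)) &
      (forall x, S x -> S x^-1)].

Definition gen_field (S : K -> Prop) : K -> Prop :=
  fun x => forall F, is_subfield F -> (forall y, S y -> F y) -> F x.

Definition pow_field (m : nat) : K -> Prop := fun x => exists y : K, x = y ^+ m.

Definition perfect_core (p : nat) : K -> Prop :=
  fun x => forall n : nat, pow_field (p ^ n) x.

Definition compositum (A B : K -> Prop) : K -> Prop :=
  gen_field (fun x => A x \/ B x).

Definition fin_gen_over (F : K -> Prop) : Prop :=
  exists s : seq K, forall x, gen_field (fun y => F y \/ y \in s) x.

Definition op_comm (b : K) (D : K -> K) : K -> K := fun x => b * D x - D (b * x).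

Definition iter_comm (bs : seq K) (D : K -> K) : K -> K := foldr op_comm D bs.

Definition linear_over (A : K -> Prop) (D : K -> K) : Prop :=
  (forall x y, D (x + y) = D x + D y) /\ (forall a x, A a -> D (a * x) = a * D x).

Definition is_diffop_order (A : K -> Prop) (n : nat) (D : K -> K) : Prop :=
  linear_over A D /\
  forall bs : seq K, size bs = n.+1 -> forall x, iter_comm bs D x = 0.

Definition Diff (A : K -> Prop) (D : K -> K) : Prop :=
  exists n : nat, is_diffop_order A n D.

End Defs.

From mathcomp Require Import all_boot all_algebra.
Set Implicit Arguments. Unset Strict Implicit. Unset Printing Implicit Defensive.
Import GRing.Theory.
Local Open Scope ring_scope.

(* If D is W-linear of order m, then D is also linear over K^{p^m}: left
   multiplication by y and precomposition with multiplication by y commute, so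
   in characteristic p the p^m-fold commutator [y, [y, ..., [y, D]]] equals
   [y^{p^m}, D], and it vanishes because p^m > m.  The scalars commuting with an
   additive D form a subfield, hence D is linear over W.K^{p^m}; the converse
   inclusion is immediate. *)

Section PolyAction.
Variables (K : fieldType) (E : K -> K) (b : K).
Implicit Types P Q : {poly K}.

(* P acts on E with 'X acting as precomposition with multiplication by b, so
   that [b, _] acts as b%:P - 'X. *)
Definition polyact P (x : K) : K :=
  \sum_(i < size P) P`_i * E (b ^+ i * x).

Lemma polyact_widen N P x : (size P <= N)%N ->
  polyact P x = \sum_(i < N) P`_i * E (b ^+ i * x).
Proof.
move=> lePN; rewrite /polyact (big_ord_widen N (fun i => P`_i * E (b ^+ i * x)) lePN).
rewrite big_mkcond; apply: eq_bigr => i _.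
by case: ltnP => // /(nth_default 0) ->; rewrite mul0r.
Qed.

Lemma polyactB P Q x : polyact (P - Q) x = polyact P x - polyact Q x.
Proof.
have leP : (size P <= size P + size Q)%N by apply: leq_addr.
have leQ : (size Q <= size P + size Q)%N by apply: leq_addl.
have lePQ : (size (P - Q)%R <= size P + size Q)%N.
  by apply: leq_trans (size_polyD _ _) _; rewrite size_polyN geq_max leP leQ.
rewrite !(polyact_widen x leP, polyact_widen x leQ, polyact_widen x lePQ).
by rewrite -sumrB; apply: eq_bigr => i _; rewrite coefB mulrBl.
Qed.

Lemma polyactCM c Q x : polyact (c%:P * Q) x = c * polyact Q x.
Proof.
have leQ : (size (c%:P * Q)%R <= size Q)%N by rewrite mul_polyC size_scale_leq.
rewrite (polyact_widen x leQ) mulr_sumr.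
by apply: eq_bigr => i _; rewrite coefCM mulrA.
Qed.

Lemma polyactXM Q x : polyact ('X * Q) x = polyact Q (b * x).
Proof.
have leQ : (size ('X * Q)%R <= (size Q).+1)%N.
  by apply: leq_trans (size_polyMleq _ _) _; rewrite size_polyX.
rewrite (polyact_widen x leQ) big_ord_recl coefXM eqxx mul0r add0r.
by apply: eq_bigr => i _; rewrite coefXM exprSr -mulrA.
Qed.

Lemma polyactC c x : polyact c%:P x = c * E x.
Proof.
have le1 : (size c%:P <= 1)%N by apply: size_polyC_leq1.
by rewrite (polyact_widen x le1) big_ord1 coefC expr0 mul1r.
Qed.

Lemma polyactXn n x : polyact ('X ^+ n) x = E (b ^+ n * x).
Proof.
elim: n x => [|n IHn] x; first by rewrite expr0 -polyC1 polyactC !mul1r.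
by rewrite exprS polyactXM IHn exprSr mulrA.
Qed.

Lemma iter_comm_nseq k x :
  iter_comm (nseq k b) E x = polyact ((b%:P - 'X) ^+ k) x.
Proof.
elim: k x => [|k IHk] x; first by rewrite expr0 -polyC1 polyactC mul1r.
by rewrite /= /op_comm !IHk exprS mulrBl polyactB polyactCM polyactXM.
Qed.

End PolyAction.

Lemma iter_comm_nseq_pchar (K : fieldType) p (E : K -> K) b n x :
  p \in [pchar K] -> iter_comm (nseq (p ^ n)%N b) E x = op_comm (b ^+ (p ^ n)) E x.
Proof.
move=> pK; have pKX : p \in [pchar {poly K}] by rewrite pchar_poly.
have pn_pchar : [pchar {poly K}].-nat (p ^ n)%N.
  by rewrite (eq_pnat _ (pcharf_eq pKX)) pnatX pnat_id ?(pcharf_prime pK).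
rewrite iter_comm_nseq exprDn_pchar // exprNn_pchar // -rmorphXn.
by rewrite polyactB polyactC polyactXn.
Qed.

Lemma iter_comm_eq0_long (K : fieldType) (E : K -> K) m :
  (forall bs : seq K, size bs = m.+1 -> forall x, iter_comm bs E x = 0) ->
  forall bs : seq K, (m < size bs)%N -> forall x, iter_comm bs E x = 0.
Proof.
move=> Em; elim=> [|c bs IHbs] //= lt_m_bs x.
have [lt_m_bs' | le_bs_m] := ltnP m (size bs).
  by rewrite /op_comm !IHbs // mulr0 subr0.
by apply: (Em (c :: bs)); apply/eqP; rewrite /= eqSS eqn_leq le_bs_m.
Qed.

Section Scalars.
Variable K : fieldType.
Implicit Types (A B : K -> Prop) (D : K -> K).

Definition scalars_of D : K -> Prop := fun a => forall x, D (a * x) = a * D x.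

Lemma scalars_of_subfield D :
  (forall x y, D (x + y) = D x + D y) -> is_subfield (scalars_of D).
Proof.
move=> D_add; have D0 : D 0 = 0.
  by apply: (addrI (D 0)); rewrite -D_add !addr0.
have DN v : D (- v) = - D v by apply: (addrI (D v)); rewrite -D_add !subrr.
split=> [x | x | u v Su Sv x | u v Su Sv x | u Su x].
- by rewrite !mul0r.
- by rewrite !mul1r.
- by rewrite !mulrBl D_add DN Su Sv.
- by rewrite -!mulrA Su Sv.
have [-> | u0] := eqVneq u 0; first by rewrite invr0 !mul0r.
by apply: (mulfI u0); rewrite -Su !mulrA !mulfV // !mul1r.
Qed.

Lemma linear_over_compositum A B D :
  linear_over A D -> linear_over B D -> linear_over (compositum A B) D.
Proof.
move=> [D_add DA] [_ DB]; split=> // a x ABa.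
apply: (ABa (scalars_of D)) => [|y [Ay | By] z].
- exact: scalars_of_subfield.
- exact: DA.
- exact: DB.
Qed.

Lemma diffop_linear_pow p A m D :
  p \in [pchar K] -> is_diffop_order A m D -> linear_over (pow_field (p ^ m)) D.
Proof.
move=> pK [[D_add _] Dm]; split=> // _ x [y ->]; apply/eqP.
have lt_m_pm : (m < size (nseq (p ^ m)%N y))%N.
  by rewrite size_nseq ltn_expl // prime_gt1 // (pcharf_prime pK).
have := iter_comm_eq0_long Dm lt_m_pm x.
by rewrite iter_comm_nseq_pchar // /op_comm => /eqP; rewrite subr_eq0 eq_sym.
Qed.

Lemma is_diffop_order_sub A B m D : (forall a, A a -> B a) ->
  is_diffop_order B m D -> is_diffop_order A m D.
Proof. by move=> sAB [[D_add DB] Dm]; split=> //; split=> // a x /sAB; apply: DB. Qed.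

Lemma compositum_l A B a : A a -> compositum A B a.
Proof. by move=> Aa F _; apply; left. Qed.

End Scalars.

Theorem lemmaL2 (K : fieldType) (p : nat) (W : K -> Prop) :
  (p \in [pchar K])%N ->
  @fin_gen_over K (perfect_core p) ->
  is_subfield W ->
  (forall x, @perfect_core K p x -> W x) ->
  forall D : K -> K,
    Diff W D <-> exists n : nat, Diff (compositum W (@pow_field K (p ^ n))) D.
Proof.
move=> pK _ _ _ D; split=> [[m Dm] | [n [m Dm]]].
  exists m, m; split; last exact: Dm.2.
  by apply: linear_over_compositum; [exact: Dm.1 | exact: diffop_linear_pow Dm].
by exists m; apply: is_diffop_order_sub Dm => a; apply: compositum_l.
Qed.
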